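(* Let $k > d \geq 1$ and $1 < q \leq k$ be integers. There is a function $f = f_{k,d,q} : \mathbb{N} \to \mathbb{R}$ with $f(N) \to 0$ as $N \to \infty$ such that for every positive integer $n$ with $q \mid n-2$, setting $N = (k-1)n - k + 2$, there exists an $N$-vertex $k$-graph $H$ with $\delta_d(H) \geq (1/q - f(N)) \binom{N-d}{k-d}$ that does not contain the $k$-expansion of any $n$-vertex tree all of whose vertex degrees are congruent to $1$ modulo $q$.
   Context: A $k$-graph is a $k$-uniform hypergraph. For a $k$-graph $H$ and $S \subseteq V(H)$, $\deg_H(S)$ is the number of edges containing $S$, and $\delta_d(H)$ is the minimum of $\deg_H(S)$ over all $d$-subsets $S \subseteq V(H)$. The $k$-expansion $T^{(k)}$ of a graph $T$ is the $k$-graph obtained by replacing each edge $uv$ of $T$ by a $k$-edge consisting of $u$, $v$ and $k-2$ new vertices that belong to no other edge. ''Contain'' means as a (not necessarily induced) subgraph. *)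

From Stdlib Require Export Reals.
From mathcomp Require Export all_boot fingraph.

Set Implicit Arguments.
Unset Strict Implicit.
Unset Printing Implicit Defensive.

Definition uniform (V : finType) (k : nat) (E : {set {set V}}) : Prop :=
  forall e, e \in E -> #|e| = k.

Definition hdeg (V : finType) (E : {set {set V}}) (S : {set V}) : nat :=
  #|[set e in E | S \subset e]|.

(* delta_d(H) = minimum of deg_H(S) over all d-subsets S
   (#|E| is used as the neutral element; it is an upper bound of every degree). *)
Definition mindeg (V : finType) (d : nat) (E : {set {set V}}) : nat :=
  \big[minn/#|E|]_(S : {set V} | #|S| == d) hdeg E S.

Definition contains (U V : finType) (F : {set {set U}}) (E : {set {set V}}) : Prop :=
  exists g : U -> V, injective g /\ forall e, e \in F -> g @: e \in E.

Definition gadj (n : nat) (ET : {set {set 'I_n}}) : rel 'I_n :=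
  fun u v => [set u; v] \in ET.

Definition is_tree (n : nat) (ET : {set {set 'I_n}}) : Prop :=
  [/\ forall e, e \in ET -> #|e| = 2,
      forall u v : 'I_n, connect (gadj ET) u v
    & #|ET| = n.-1].

Definition gdeg (n : nat) (ET : {set {set 'I_n}}) (v : 'I_n) : nat :=
  #|[set e in ET | v \in e]|.

(* Vertices of the k-expansion T^(k): the original vertices, plus for each
   edge e of T, k-2 new vertices (e, 0), ..., (e, k-3). *)
Definition exp_new (n k : nat) (ET : {set {set 'I_n}}) : predArgType :=
  {x : {set 'I_n} * 'I_(k - 2) | x.1 \in ET}.

Definition exp_vert (n k : nat) (ET : {set {set 'I_n}}) : finType :=
  ('I_n + exp_new k ET)%type.

Definition exp_edge (n k : nat) (ET : {set {set 'I_n}}) (e : {set 'I_n})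
  : {set exp_vert k ET} :=
  [set inl v | v in e] :|: [set inr x | x : exp_new k ET & (val x).1 == e].

Definition expansion (n k : nat) (ET : {set {set 'I_n}}) : {set {set exp_vert k ET}} :=
  [set exp_edge k ET e | e in ET].

(* Label the N vertices by 0, ..., N-1 and let H consist of the k-sets whose
   label sum is congruent to c := W + 1 mod q, where W is the sum of all
   labels.  Since T^(k) has exactly N vertices, a copy of it in H is spanning.
   Adding up the label sums of its n - 1 edges counts every vertex as often as
   its degree, which is 1 mod q, so the total is W mod q; but every edge
   contributes c and n - 1 = 1 mod q, so the total is also W + 1 mod q.
   For the degree bound, every (k-1)-set A extends to an edge of H by at least
   floor(N/q) - |A| vertices (a residue class minus A), and double counting the
   pairs (edge, vertex outside S) gives
   deg(S) >= C(N-d, k-d) (floor(N/q) - k + 1) / (N - k + 1),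
   which is at least (1/q - k/N) C(N-d, k-d). *)

From Stdlib Require Import Lra Lia.
From mathcomp Require Import zify.
Set Implicit Arguments.
Unset Strict Implicit.
Unset Printing Implicit Defensive.

Definition label_sum N (A : {set 'I_N}) : nat := \sum_(v in A) (v : nat).

Definition residue_kgraph N k q c : {set {set 'I_N}} :=
  [set e : {set 'I_N} | (#|e| == k) && (label_sum e %% q == c)].

Lemma residue_kgraph_uniform N k q c : uniform k (residue_kgraph N k q c).
Proof. by move=> e; rewrite inE => /andP[/eqP]. Qed.

Lemma modn_sum_eq (I : finType) (P : pred I) (F G : I -> nat) q :
  (forall i, P i -> F i = G i %[mod q]) ->
  \sum_(i | P i) F i = \sum_(i | P i) G i %[mod q].
Proof. by move=> FG; rewrite -modn_summ (eq_bigr _ FG) modn_summ. Qed.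

Lemma hdeg1 (U : finType) (F : {set {set U}}) (x : U) :
  hdeg F [set x] = #|[set e in F | x \in e]|.
Proof. by apply: eq_card => e; rewrite !inE sub1set. Qed.

Lemma sum_edge_weights (U : finType) (F : {set {set U}}) (w : U -> nat) :
  \sum_(e in F) \sum_(x in e) w x = \sum_x w x * hdeg F [set x].
Proof.
rewrite (exchange_big_dep xpredT) //=; apply: eq_bigr => x _.
rewrite hdeg1 mulnC -sum_nat_const; apply: eq_bigl => e; by rewrite inE.
Qed.

Lemma residue_kgraph_free (U : finType) N k q (F : {set {set U}}) :
  1 < q -> #|U| = N -> #|F| = 1 %[mod q] ->
  (forall x, hdeg F [set x] = 1 %[mod q]) ->
  ~ contains F (residue_kgraph N k q ((label_sum [set: 'I_N]).+1 %% q)).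
Proof.
move=> q_gt1 cardU cardF degF [g [g_inj gF]].
set W := label_sum [set: 'I_N].
have g_onto : g @: [set: U] = [set: 'I_N].
  apply/eqP; rewrite eqEcard subsetT card_imset // !cardsT card_ord cardU.
  exact: leqnn.
have sum_g : \sum_x (g x : nat) = W.
  rewrite /W /label_sum -g_onto big_imset /=; last by move=> x y _ _ /g_inj.
  by apply: eq_bigl => x; rewrite inE.
have edge_sum e : e \in F -> \sum_(x in e) (g x : nat) = W.+1 %[mod q].
  move=> eF; move: (gF e eF); rewrite inE => /andP[_ /eqP <-].
  by rewrite /label_sum big_imset //= => x y _ _ /g_inj.
have : W = W.+1 %[mod q].
  rewrite -{1}sum_g.
  transitivity ((\sum_(e in F) \sum_(x in e) (g x : nat)) %% q).
    rewrite sum_edge_weights; apply: modn_sum_eq => x _.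
    by rewrite -modnMmr degF modnMmr muln1.
  rewrite (modn_sum_eq edge_sum) sum_nat_const -modnMml cardF modnMml.
  by rewrite mul1n.
rewrite -addn1 -[W in W %% q]addn0 => /eqP; rewrite eqn_modDl mod0n.
by rewrite (modn_small q_gt1).
Qed.

Section Expansion.
Variables (n k : nat) (ET : {set {set 'I_n}}).

Lemma mem_exp_edge e (x : exp_vert k ET) :
  (x \in exp_edge k ET e) =
  match x with inl v => v \in e | inr y => (val y).1 == e end.
Proof.
rewrite /exp_edge in_setU; case: x => [v|y].
  rewrite mem_imset; last by move=> ? ? [].
  by rewrite orbC; case: imsetP => // -[].
rewrite mem_imset /=; last by move=> ? ? [].
by rewrite inE; case: imsetP => // -[].
Qed.

Lemma exp_edge_inj : injective (exp_edge k ET).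
Proof.
move=> e1 e2 same; apply/setP => v.
by rewrite -(mem_exp_edge e1 (inl v)) same mem_exp_edge.
Qed.

Lemma card_expansion : #|expansion k ET| = #|ET|.
Proof. exact: card_imset exp_edge_inj. Qed.

Lemma card_exp_vert : #|exp_vert k ET| = n + #|ET| * (k - 2).
Proof.
rewrite /exp_vert card_sum card_ord card_sig.
have -> : #|[pred x : {set 'I_n} * 'I_(k - 2) | x.1 \in ET]| =
          #|setX ET [set: 'I_(k - 2)]|.
  by apply: eq_card => x; rewrite !inE andbT.
by rewrite cardsX cardsT card_ord.
Qed.

Lemma hdeg_expansion_inl v : hdeg (expansion k ET) [set inl v] = gdeg ET v.
Proof.
rewrite hdeg1 /gdeg -(card_imset _ exp_edge_inj); apply: eq_card => f.
apply/idP/idP.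
  rewrite inE => /andP[/imsetP[e eET ->]]; rewrite mem_exp_edge => ve.
  by rewrite imset_f // inE eET.
case/imsetP=> e /setIdP[eET ve] ->.
by rewrite inE imset_f // mem_exp_edge.
Qed.

Lemma hdeg_expansion_inr y : hdeg (expansion k ET) [set inr y] = 1.
Proof.
rewrite hdeg1 -[RHS](cards1 (exp_edge k ET (val y).1)); apply: eq_card => f.
rewrite !inE; apply/andP/eqP => [[/imsetP[e eET ->]] | ->].
  by rewrite mem_exp_edge => /eqP ->.
by rewrite imset_f ?(valP y) // mem_exp_edge.
Qed.

End Expansion.

Lemma sum_extensions_le (V : finType) k (E : {set {set V}}) (S : {set V}) :
  uniform k E ->
  \sum_(R : {set V} | (R \subset ~: S) && (#|R| == (k - #|S|).-1))
     #|[set v | (v \notin S :|: R) && (v |: (S :|: R) \in E)]|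
  <= (k - #|S|) * hdeg E S.
Proof.
move=> Ek.
set D := fun R : {set V} => (R \subset ~: S) && (#|R| == (k - #|S|).-1).
set ext := fun R : {set V} => [set v | (v \notin S :|: R) && (v |: (S :|: R) \in E)].
set P := [set p : {set V} * V | [&& p.1 \in E, S \subset p.1 & p.2 \in p.1 :\: S]].
have cardP : #|P| = (k - #|S|) * hdeg E S.
  transitivity (\sum_(e in [set e in E | S \subset e]) \sum_(v in e :\: S) 1).
    rewrite pair_big_dep sum1dep_card.
    by apply: eq_card => -[e v]; rewrite !inE andbA.
  rewrite /hdeg mulnC -sum_nat_const; apply: eq_bigr => e /setIdP[eE Se].
  by rewrite sum1_card cardsD (setIidPr Se) (Ek e eE).
rewrite -cardP.
under eq_bigr do rewrite -sum1_card.
rewrite pair_big_dep sum1dep_card.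
have recover_R R v : D R -> v \notin S :|: R -> (v |: (S :|: R)) :\ v :\: S = R.
  case/andP=> RS _ vSR; rewrite setU1K //.
  rewrite setDUl setDv set0U; apply/setDidPl.
  by rewrite -[S]setCK -subsets_disjoint.
set Q := [set p : {set V} * V | D p.1 && (p.2 \in ext p.1)].
have inj : {in Q &, injective (fun p : {set V} * V => (p.2 |: (S :|: p.1), p.2))}.
  move=> [R1 v1] [R2 v2]; rewrite !inE /= -!in_setU => /andP[D1 /andP[vR1 _]].
  move=> /andP[D2 /andP[vR2 _]] [E12 ev]; subst v2.
  by rewrite -(recover_R R1 v1 D1 vR1) -(recover_R R2 v1 D2 vR2) E12.
rewrite -(card_in_imset inj); apply/subset_leq_card/subsetP => p /imsetP[[R v]].
rewrite !inE /= -!in_setU => /andP[_ /andP[vSR vE]] ->.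
rewrite !inE /= vE eqxx (subset_trans (subsetUl S R) (subsetU1 _ _)) andbT /=.
by apply: contra vSR; rewrite inE => ->.
Qed.

Lemma codegree_bound (V : finType) k (E : {set {set V}}) (S : {set V}) b :
  uniform k E -> #|S| < k ->
  (forall A : {set V}, S \subset A -> #|A| = k.-1 ->
     b <= #|[set v | (v \notin A) && (v |: A \in E)]|) ->
  'C(#|V| - #|S|, (k - #|S|).-1) * b <= (k - #|S|) * hdeg E S.
Proof.
move=> Ek Sk ext_ge; apply: leq_trans (sum_extensions_le S Ek).
have cardSC : #|~: S| = #|V| - #|S| by rewrite cardsCs setCK.
rewrite -cardSC -cards_draws -sum_nat_const.
under eq_bigl => R do rewrite inE.
apply: leq_sum => R /andP[RS /eqP cardR]; apply: ext_ge; first exact: subsetUl.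
have /disjoint_setI0 SR0 : [disjoint S & R].
  by rewrite disjoint_sym -[S]setCK -subsets_disjoint.
rewrite cardsU SR0 cards0 cardR; lia.
Qed.

Lemma card_residue_class N q b c :
  0 < q -> c < q -> N %/ q <= #|[set v : 'I_N | (b + v) %% q == c]|.
Proof.
move=> q_gt0 c_lt_q; case: N => [|N]; first by rewrite div0n.
set r := (c + (q - b %% q)) %% q.
have r_lt_q : r < q by rewrite ltn_mod.
have jqr_lt (j : 'I_(N.+1 %/ q)) : j * q + r < N.+1.
  have : j.+1 * q <= N.+1 %/ q * q by rewrite leq_mul2r ltn_ord orbT.
  by have := leq_divM N.+1 q; rewrite mulSn; lia.
pose h (j : 'I_(N.+1 %/ q)) : 'I_N.+1 := Ordinal (jqr_lt j).
have h_inj : injective h.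
  by move=> i j [/eqP]; rewrite eqn_add2r eqn_pmul2r // => /eqP/val_inj.
rewrite -[X in X <= _]card_ord -(card_imset _ h_inj); apply: subset_leq_card.
apply/subsetP => _ /imsetP[j _ ->]; rewrite inE /= addnCA modnMDl /r modnDmr.
have -> : b + (c + (q - b %% q)) = (b %/ q).+1 * q + c.
  by rewrite {1}(divn_eq b q) mulSn; have := ltn_pmod b q_gt0; lia.
by rewrite modnMDl modn_small.
Qed.

Lemma residue_kgraph_extensions N k q c (A : {set 'I_N}) :
  0 < q -> c < q -> 0 < k -> #|A| = k.-1 ->
  N %/ q - k.-1 <= #|[set v | (v \notin A) && (v |: A \in residue_kgraph N k q c)]|.
Proof.
move=> q_gt0 c_lt_q k_gt0 cardA.
set Y := [set v : 'I_N | (label_sum A + v) %% q == c].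
have -> : [set v | (v \notin A) && (v |: A \in residue_kgraph N k q c)] = Y :\: A.
  apply/setP => v; rewrite !inE; case: (boolP (v \in A)) => //= vA.
  by rewrite cardsU1 vA cardA add1n prednK // eqxx /label_sum big_setU1 //= addnC.
rewrite cardsD leq_sub //; first exact: card_residue_class.
by rewrite -cardA subset_leq_card ?subsetIr.
Qed.

Lemma leq_mindeg (V : finType) d (E : {set {set V}}) a x :
  d <= #|V| -> (forall S : {set V}, #|S| = d -> x <= a * hdeg E S) ->
  x <= a * mindeg d E.
Proof.
move=> d_le_V deg_ge.
have [S0 cardS0] : exists S0 : {set V}, #|S0| = d.
  have : 0 < #|[set A : {set V} | #|A| == d]| by rewrite card_draws bin_gt0.
  by case/card_gt0P => S; rewrite inE => /eqP; exists S.
rewrite /mindeg; apply: (big_ind (fun m => x <= a * m)) => [||S /eqP]; last exact: deg_ge.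
  apply: leq_trans (deg_ge S0 cardS0) _; rewrite leq_mul2l subset_leq_card ?orbT //.
  by apply/subsetP => e /setIdP[].
by move=> m1 m2; rewrite minnMr leq_min => -> ->.
Qed.

Lemma mindeg_residue_kgraph N k d q c :
  0 < q -> c < q -> d < k -> d <= N ->
  'C(N - d, (k - d).-1) * (N %/ q - k.-1) <= (k - d) * mindeg d (residue_kgraph N k q c).
Proof.
move=> q_gt0 c_lt_q d_lt_k d_le_N; apply: leq_mindeg; first by rewrite card_ord.
move=> S cardS; rewrite -cardS -[N in N - #|S|]card_ord.
apply: codegree_bound; [exact: residue_kgraph_uniform | by rewrite cardS |].
by move=> A _; apply: residue_kgraph_extensions => //; lia.
Qed.

Section RealBounds.
Local Open Scope R_scope.

Lemma cv_div_INR (a : R) : Un_cv (fun N => a / INR N) 0.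
Proof.
have cv_inv : Un_cv (fun N => / INR N) 0.
  apply: cv_infty_cv_0 => M; have [n Hn] := INR_unbounded M.
  by exists n => m nm; have := le_INR _ _ nm; lra.
have := CV_mult (fun _ => a) _ a 0 _ cv_inv; rewrite Rmult_0_r; apply.
by exists 0%nat => *; rewrite /R_dist Rminus_diag Rabs_R0.
Qed.

Lemma Rge_mul_lower_bound (a b c t L N M s : R) :
  0 < a -> 0 <= c -> 0 <= L <= N -> 0 <= M -> M >= s * N ->
  a * b >= c * M -> a * t = L * c -> b >= s * t.
Proof.
move=> a_pos c_ge0 [L_ge0 L_le_N] M_ge0 M_ge ab_ge at_eq.
have M_ge_sL : M >= s * L by case: (Rle_or_lt s 0) => s_sign; nra.
have scaled : a * (s * t) = c * (s * L).
  by transitivity (s * (a * t)); [ring | rewrite at_eq; ring].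
have : c * (s * L) <= c * M by apply: Rmult_le_compat_l; lra.
rewrite -scaled => ast_le; apply/Rle_ge/(Rmult_le_reg_l _ _ _ a_pos); lra.
Qed.

Lemma divn_sub_lower_bound (N q k : nat) : (0 < q)%N -> (0 < N)%N -> (0 < k)%N ->
  INR (N %/ q - k.-1) >= (1 / INR q - INR k / INR N) * INR N.
Proof.
move=> q_gt0 N_gt0 k_gt0.
have q_pos : 0 < INR q by apply/lt_0_INR/ltP.
have N_pos : 0 < INR N by apply/lt_0_INR/ltP.
have trunc : INR (N %/ q) + 1 <= INR (N %/ q - k.-1) + INR k.
  rewrite -S_INR -plus_INR; apply/le_INR/leP; lia.
have floor : INR N < (INR (N %/ q) + 1) * INR q.
  rewrite -S_INR -mult_INR; apply: lt_INR.
  by have := ltn_pmod N q_gt0; have := divn_eq N q; lia.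
have -> : (1 / INR q - INR k / INR N) * INR N = INR N / INR q - INR k.
  by field; lra.
have : INR N / INR q < INR (N %/ q) + 1.
  by apply: (Rmult_lt_reg_r (INR q)) => //; rewrite /Rdiv Rmult_assoc Rinv_l; lra.
lra.
Qed.

Lemma mindeg_residue_kgraph_ge N k d q c :
  (0 < q)%N -> (c < q)%N -> (d < k)%N -> (0 < N)%N ->
  INR (mindeg d (residue_kgraph N k q c)) >=
  (1 / INR q - INR k / INR N) * INR 'C(N - d, k - d).
Proof.
move=> q_gt0 c_lt_q d_lt_k N_gt0; case: (leqP d N) => [d_le_N | N_lt_d]; last first.
  rewrite (_ : N - d = 0)%N; last by lia.
  by rewrite bin0n (_ : (k - d == 0)%N = false) ?Rmult_0_r; [apply/Rle_ge/pos_INR | lia].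
have [m km] : exists m, (k - d = m.+1)%N by exists (k - d).-1; lia.
have nat_bound := mindeg_residue_kgraph q_gt0 c_lt_q d_lt_k d_le_N.
rewrite km /= in nat_bound *.
apply: (Rge_mul_lower_bound (a := INR m.+1) (c := INR 'C(N - d, m))
          (L := INR (N - d - m)) (N := INR N) (M := INR (N %/ q - k.-1))).
- exact/lt_0_INR/ltP.
- exact: pos_INR.
- by split; [apply: pos_INR | apply/le_INR/leP; lia].
- exact: pos_INR.
- by apply: divn_sub_lower_bound => //; lia.
- by rewrite -!mult_INR; apply/Rle_ge/le_INR/leP.
- by rewrite -!mult_INR; congr INR; apply: mul_bin_left.
Qed.

End RealBounds.

Theorem theorem3p4 (k d q : nat) :
  (1 <= d)%N -> (d < k)%N -> (1 < q)%N -> (q <= k)%N ->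
  exists f : nat -> R,
    Un_cv (fun N => f N) R0 /\
    forall n : nat, (0 < n)%N ->
      n = 2 %[mod q] ->
      let N := ((k - 1) * n + 2 - k)%N in
      exists E : {set {set 'I_N}},
        uniform k E /\
        Rge (INR (mindeg d E))
            (Rmult (Rminus (Rdiv R1 (INR q)) (f N)) (INR 'C(N - d, k - d))) /\
        forall ET : {set {set 'I_n}},
          is_tree ET ->
          (forall v : 'I_n, gdeg ET v = 1 %[mod q]) ->
          ~ contains (expansion k ET) E.
Proof.
move=> d_ge1 d_lt_k q_gt1 _.
exists (fun N => Rdiv (INR k) (INR N)); split; first exact: cv_div_INR.
move=> n n_gt0 n_mod N.
set c := ((label_sum [set: 'I_N]).+1 %% q)%N.
exists (residue_kgraph N k q c); split; first exact: residue_kgraph_uniform.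
split.
  apply: mindeg_residue_kgraph_ge => //; [lia | by rewrite ltn_mod; lia |].
  by have := leq_pmulr (k - 1) n_gt0; lia.
move=> ET [_ _ cardET] deg_mod; apply: residue_kgraph_free => //.
- by rewrite card_exp_vert cardET /N; nia.
- have : (n.-1 + 1 = 1 + 1 %[mod q])%N by rewrite addn1 prednK.
  by rewrite card_expansion cardET => /eqP; rewrite eqn_modDr => /eqP.
- by case=> [v | y]; rewrite ?hdeg_expansion_inl ?hdeg_expansion_inr.
Qed.
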